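(* Let $m,n$ be positive integers with $m$ even ($n$ arbitrary). A matrix $A\in\Gamma^\pi_{m,n}$ is an extreme point of $\Gamma^\pi_{m,n}$ if and only if $A$ is a centrosymmetric rectangular permutation matrix.
   Context: A real $m\times n$ matrix is stochastic if its entries are nonnegative and each row sums to $1$. For $A=(a_{i,j})\in M_{m,n}$, $A^\pi$ is the matrix with $(A^\pi)_{i,j}=a_{m+1-i,n+1-j}$; $A$ is centrosymmetric if $A=A^\pi$. $\Gamma^\pi_{m,n}$ is the convex set of $m\times n$ centrosymmetric stochastic matrices. A rectangular permutation matrix is an $m\times n$ $(0,1)$-matrix with exactly one $1$ in each row. *)

From mathcomp Require Import all_boot all_order all_algebra.
From mathcomp Require Import reals.
Set Implicit Arguments. Unset Strict Implicit. Unset Printing Implicit Defensive.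
Import Order.TTheory GRing.Theory Num.Theory.
Local Open Scope ring_scope.

(* A^pi : (A^pi)_{i,j} = a_{m+1-i, n+1-j}; with 0-based ordinals this is rev_ord. *)
Definition pimx (R : Type) (m n : nat) (A : 'M[R]_(m, n)) : 'M[R]_(m, n) :=
  \matrix_(i < m, j < n) A (rev_ord i) (rev_ord j).

Definition centrosymmetric (R : Type) (m n : nat) (A : 'M[R]_(m, n)) : Prop :=
  A = pimx A.

Definition stochastic (R : numDomainType) (m n : nat) (A : 'M[R]_(m, n)) : Prop :=
  (forall i j, 0 <= A i j) /\ (forall i, \sum_(j < n) A i j = 1).

Definition in_Gamma_pi (R : numDomainType) (m n : nat) (A : 'M[R]_(m, n)) : Prop :=
  centrosymmetric A /\ stochastic A.

Definition extreme_point (R : numDomainType) (m n : nat)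
    (S : 'M[R]_(m, n) -> Prop) (A : 'M[R]_(m, n)) : Prop :=
  S A /\
  forall (B C : 'M[R]_(m, n)) (t : R), S B -> S C -> 0 < t -> t < 1 ->
    A = t *: B + (1 - t) *: C -> B = A /\ C = A.

Definition rect_perm_mx (R : numDomainType) (m n : nat) (A : 'M[R]_(m, n)) : Prop :=
  (forall i j, A i j = 0 \/ A i j = 1) /\
  (forall i, exists! j, A i j = 1).

From mathcomp Require Import all_boot all_order all_algebra.
From mathcomp Require Import reals.
From mathcomp Require Import lra zify.
Set Implicit Arguments. Unset Strict Implicit. Unset Printing Implicit Defensive.
Import Order.TTheory GRing.Theory Num.Theory.
Local Open Scope ring_scope.

(* A rectangular permutation matrix is extreme among all stochastic matrices,
   since each of its zero entries must stay zero in any convex decomposition.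
   Conversely, if a row i of a centrosymmetric stochastic A has two positive
   entries A i j and A i k, put +eps at (i, j), -eps at (i, k), and the
   mirrored values in row rev_ord i.  As m is even, row rev_ord i differs from
   row i, so this centrosymmetric perturbation D has zero row sums and is
   dominated by A for small eps; then A = (A + D)/2 + (A - D)/2 is a proper
   convex combination inside Gamma^pi, and A is not extreme. *)

Lemma rev_ord_neq (m : nat) (i : 'I_m) : ~~ odd m -> rev_ord i != i.
Proof.
move=> m_even; apply/eqP => /(congr1 val) /= i_mid.
have m_odd : m = (i.*2).+1 by move: (ltn_ord i) i_mid; rewrite -addnn; lia.
by move: m_even; rewrite m_odd /= odd_double.
Qed.

Lemma centrosymmetricP (R : Type) (m n : nat) (A : 'M[R]_(m, n)) :
  centrosymmetric A <-> forall i j, A (rev_ord i) (rev_ord j) = A i j.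
Proof.
split=> [cA i j | cA]; last by apply/matrixP => i j; rewrite mxE cA.
by rewrite {2}cA mxE.
Qed.

Lemma sum_indicator (R : nzSemiRingType) (n : nat) (j : 'I_n) :
  \sum_(k < n) ((k == j)%:R : R) = 1.
Proof. by rewrite (bigD1 j) //= eqxx big1 ?addr0 // => k /negbTE ->. Qed.

Lemma eq_indicator_of_sum1 (R : nzSemiRingType) (n : nat) (x : 'I_n -> R) (j : 'I_n) :
  \sum_k x k = 1 -> (forall k, k != j -> x k = 0) -> forall k, x k = (k == j)%:R.
Proof.
move=> x_sum1 x_supp k; have [->|/x_supp //] := eqVneq k j.
by rewrite -x_sum1 (bigD1 j) //= big1 ?addr0.
Qed.

Lemma convex_comb_eq0 (R : numDomainType) (t b c : R) :
  0 <= b -> 0 <= c -> 0 < t -> t < 1 -> t * b + (1 - t) * c = 0 -> b = 0 /\ c = 0.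
Proof.
move=> b_ge0 c_ge0 t_gt0 t_lt1 /eqP.
have t'_ge0 : 0 <= 1 - t by rewrite subr_ge0 ltW.
rewrite paddr_eq0 ?mulr_ge0 ?(ltW t_gt0) //.
rewrite !mulf_eq0 subr_eq0 (gt_eqF t_gt0) (gt_eqF t_lt1) /=.
by move=> /andP[/eqP-> /eqP->].
Qed.

Lemma rect_perm_mxP (R : numDomainType) (m n : nat) (A : 'M[R]_(m, n)) :
  rect_perm_mx A <-> forall i, exists j, forall k, A i k = (k == j)%:R.
Proof.
split=> [[A01 A_uniq] i | A_rows].
  have [j [Aij1 Aij_uniq]] := A_uniq i; exists j => k.
  have [->|nkj] := eqVneq k j; first by rewrite Aij1.
  by have [//|/Aij_uniq ekj] := A01 i k; rewrite ekj eqxx in nkj.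
split=> [i k | i]; have [j Ai] := A_rows i.
  by rewrite Ai; case: (k == j); [right | left].
exists j; split=> [|k]; first by rewrite Ai eqxx.
by rewrite Ai; case: eqVneq => // _ /eqP; rewrite eq_sym oner_eq0.
Qed.

Lemma stochastic_rect_perm_mx (R : numDomainType) (m n : nat) (A : 'M[R]_(m, n)) :
  stochastic A -> (forall i j k, A i j != 0 -> A i k != 0 -> j = k) -> rect_perm_mx A.
Proof.
move=> [_ A_sum1] A_supp; apply/rect_perm_mxP => i.
have [j Aij_neq0] : exists j, A i j != 0.
  apply/existsP; apply: contraT; rewrite negb_exists => /forallP A_row0.
  by have := A_sum1 i; rewrite big1 => [/eqP|k _]; [rewrite eq_sym oner_eq0 | apply/eqP/negPn].
exists j; apply: eq_indicator_of_sum1 (A_sum1 i) _ => k; apply: contraNeq.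
by move/(A_supp i j k Aij_neq0)->.
Qed.

Lemma rect_perm_mx_extreme (R : numDomainType) (m n : nat)
    (S : 'M[R]_(m, n) -> Prop) (A : 'M[R]_(m, n)) :
  (forall B, S B -> stochastic B) -> S A -> rect_perm_mx A -> extreme_point S A.
Proof.
move=> S_stoch SA /rect_perm_mxP A_rows; split=> // B C t SB SC t_gt0 t_lt1 A_comb.
have [[B_ge0 _] [C_ge0 _]] := (S_stoch B SB, S_stoch C SC).
have A0_BC0 i k : A i k = 0 -> B i k = 0 /\ C i k = 0.
  move=> Aik0; apply: convex_comb_eq0 (B_ge0 i k) (C_ge0 i k) t_gt0 t_lt1 _.
  by rewrite -Aik0 A_comb !mxE.
have eqA M : stochastic M -> (forall i k, A i k = 0 -> M i k = 0) -> M = A.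
  move=> [_ M_sum1] M_supp; apply/matrixP => i k; have [j Ai] := A_rows i.
  rewrite Ai; apply: eq_indicator_of_sum1 (M_sum1 i) _ k => l nlj.
  by apply: M_supp; rewrite Ai (negbTE nlj).
split.
- by apply: eqA (S_stoch B SB) _ => i k /A0_BC0[].
- by apply: eqA (S_stoch C SC) _ => i k /A0_BC0[].
Qed.

Lemma extreme_point_perturb (R : numFieldType) (m n : nat)
    (S : 'M[R]_(m, n) -> Prop) (A D : 'M[R]_(m, n)) :
  extreme_point S A -> S (A + D) -> S (A - D) -> D = 0.
Proof.
move=> [_ A_ext] SAD SAmD.
have half_gt0 : (0 : R) < 2^-1 by rewrite invr_gt0 ltr0Sn.
have half_lt1 : (2^-1 : R) < 1 by rewrite invf_lt1 ?ltr0Sn // ltr1n.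
have [ADA _] : A + D = A /\ A - D = A.
  apply: A_ext SAD SAmD half_gt0 half_lt1 _.
  have half_half : 1 - 2^-1 = 2^-1 :> R by rewrite {1}(splitr 1) mul1r addrK.
  apply/matrixP => i j; rewrite !mxE half_half -mulrDr addrACA subrr addr0.
  by rewrite mulrDr mulrC -splitr.
by rewrite -(addKr A D) ADA addNr.
Qed.

Lemma in_Gamma_pi_perturb (R : realDomainType) (m n : nat) (A D : 'M[R]_(m, n)) :
  in_Gamma_pi A -> centrosymmetric D -> (forall i, \sum_j D i j = 0) ->
  (forall i j, `|D i j| <= A i j) -> in_Gamma_pi (A + D) /\ in_Gamma_pi (A - D).
Proof.
move=> [/centrosymmetricP cA [_ A_sum1]].
suff add_perturb E : centrosymmetric E -> (forall i, \sum_j E i j = 0) ->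
    (forall i j, `|E i j| <= A i j) -> in_Gamma_pi (A + E).
  move=> D_sym D_sum0 D_le; split; apply: add_perturb => //.
  - by move/centrosymmetricP: D_sym => cD; apply/centrosymmetricP => i j; rewrite !mxE cD.
  - by move=> i; under eq_bigr do rewrite mxE; rewrite sumrN D_sum0 oppr0.
  - by move=> i j; rewrite mxE normrN.
move=> /centrosymmetricP cE E_sum0 E_le; split; [|split] => [|i j|i].
- by apply/centrosymmetricP => i j; rewrite !mxE cA cE.
- by rewrite mxE; have := E_le i j; rewrite ler_norml => /andP[? _]; lra.
- by under eq_bigr do rewrite mxE; rewrite big_split /= A_sum1 E_sum0 addr0.
Qed.

Section CentrosymmetricRow.

Variables (R : realDomainType) (m n : nat) (i0 : 'I_m) (e : 'I_n -> R).

Definition centro_row : 'M[R]_(m, n) :=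
  \matrix_(i, j) ((i == i0)%:R * e j + (rev_ord i == i0)%:R * e (rev_ord j)).

Lemma centro_row_centrosymmetric : centrosymmetric centro_row.
Proof. by apply/centrosymmetricP => i j; rewrite !mxE (rev_ordK i) (rev_ordK j) addrC. Qed.

Lemma centro_row_sum0 : \sum_j e j = 0 -> forall i, \sum_j centro_row i j = 0.
Proof.
move=> e_sum0 i; under eq_bigr do rewrite mxE.
have e_rev_sum0 : \sum_j e (rev_ord j) = 0.
  by rewrite (reindex_inj rev_ord_inj); under eq_bigr do rewrite rev_ordK.
by rewrite big_split /= -!mulr_sumr e_sum0 e_rev_sum0 !mulr0 addr0.
Qed.

Hypothesis i0_unmirrored : rev_ord i0 != i0.

Lemma centro_row_i0 j : centro_row i0 j = e j.
Proof. by rewrite mxE eqxx (negbTE i0_unmirrored) mul0r addr0 mul1r. Qed.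

Lemma centro_row_norm_le (A : 'M[R]_(m, n)) :
  centrosymmetric A -> (forall i j, 0 <= A i j) -> (forall j, `|e j| <= A i0 j) ->
  forall i j, `|centro_row i j| <= A i j.
Proof.
move=> /centrosymmetricP cA A_ge0 e_le i j.
have [->|ni0] := eqVneq i i0; first by rewrite centro_row_i0.
rewrite mxE (negbTE ni0) mul0r add0r.
have [rev_i|_] := eqVneq (rev_ord i) i0; last by rewrite mul0r normr0.
by rewrite mul1r -cA rev_i.
Qed.

End CentrosymmetricRow.

Lemma extreme_Gamma_pi_row_support (R : realFieldType) (m n : nat)
    (A : 'M[R]_(m, n)) :
  ~~ odd m -> extreme_point (@in_Gamma_pi R m n) A ->
  forall i j k, A i j != 0 -> A i k != 0 -> j = k.
Proof.
move=> m_even A_ext i j k Aij_neq0 Aik_neq0; apply/eqP; apply: contraT => njk.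
have [[cA [A_ge0 _]] _] := A_ext.
have A_gt0 l : A i l != 0 -> 0 < A i l by rewrite lt_def => ->; apply: A_ge0.
pose eps := Num.min (A i j) (A i k).
have eps_gt0 : 0 < eps by rewrite lt_min !A_gt0.
have [eps_le_j eps_le_k] : eps <= A i j /\ eps <= A i k by rewrite !ge_min !lexx orbT.
pose e l := eps * ((l == j)%:R - (l == k)%:R).
have e_sum0 : \sum_l e l = 0 by rewrite -mulr_sumr sumrB !sum_indicator subrr mulr0.
have e_le l : `|e l| <= A i l.
  rewrite /e; have [->|nlj] := eqVneq l j; first by rewrite (negbTE njk) subr0 mulr1 gtr0_norm.
  have [->|nlk] := eqVneq l k; last by rewrite subrr mulr0 normr0.
  by rewrite sub0r mulrN1 normrN gtr0_norm.
have i_unmirrored := rev_ord_neq i m_even.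
have D_le := centro_row_norm_le i_unmirrored cA A_ge0 e_le.
have [AD_in AmD_in] := in_Gamma_pi_perturb A_ext.1
  (centro_row_centrosymmetric i e) (centro_row_sum0 i e_sum0) D_le.
have /matrixP/(_ i j) := extreme_point_perturb A_ext AD_in AmD_in.
rewrite centro_row_i0 // mxE /e eqxx (negbTE njk) subr0 mulr1.
by move/eqP; rewrite gt_eqF.
Qed.

Theorem mainTheorem3 (R : realType) (m n : nat) (hm : (0 < m)%N) (hn : (0 < n)%N)
    (hmeven : ~~ odd m) (A : 'M[R]_(m, n)) (hA : in_Gamma_pi A) :
  extreme_point (@in_Gamma_pi R m n) A <-> (rect_perm_mx A /\ centrosymmetric A).
Proof.
split=> [A_ext | [A_perm _]].
- split; last exact: hA.1.
  exact: stochastic_rect_perm_mx hA.2 (extreme_Gamma_pi_row_support hmeven A_ext).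
- exact: (rect_perm_mx_extreme (fun B (B_in : in_Gamma_pi B) => B_in.2) hA A_perm).
Qed.
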